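(* Let $p$ be an odd prime and $q=p^r$ with $r\ge1$. Let $k\in(\mathbb{Z}/q\mathbb{Z})^\times$ and let $\theta_k:(\mathbb{Z}/q\mathbb{Z})^\times\to(\mathbb{Z}/q\mathbb{Z})^\times$ be multiplication by $k$, $\theta_k(u)=ku$. Let $f:(\mathbb{Z}/q\mathbb{Z})^\times\to\mathbb{R}$ be a function that is monotonic on $[1,q]_\mathbb{Z}$. Then the following are equivalent: (i) $f\circ\theta_k=f$; (ii) $k=1$ or $f$ is constant.
   Context: $[a,b]_\mathbb{Z}$ denotes the set of integers in the closed interval $[a,b]$ not divisible by $p$; $[1,q]_\mathbb{Z}$ is used as the set of representatives of $(\mathbb{Z}/q\mathbb{Z})^\times$, and ''$f$ monotonic on $[1,q]_\mathbb{Z}$'' means that $i\mapsto f(i\bmod q)$ is monotonic on this set of integers ordered as usual. *)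

From mathcomp Require Import all_boot all_order all_algebra all_fingroup.
From mathcomp Require Import reals.
Set Implicit Arguments. Unset Strict Implicit. Unset Printing Implicit Defensive.
Import Order.TTheory GRing.Theory Num.Theory.

(* For q > 1 the set [1,q]_Z of integers in [1,q]
   not divisible by p (q = p^r) is in order-preserving bijection with the
   units via u |-> val (val u) (the representative in [0, q-1]; units are
   never 0 and q itself is excluded since p | q). *)
Definition unit_rep (q : nat) (u : {unit 'Z_q}) : nat := val (val u).

Definition monotonic_units (R : realType) (q : nat)
    (f : {unit 'Z_q} -> R) : Prop :=
  (forall u v : {unit 'Z_q}, (unit_rep u <= unit_rep v)%N -> (f u <= f v)%R) \/
  (forall u v : {unit 'Z_q}, (unit_rep u <= unit_rep v)%N -> (f v <= f u)%R).

From mathcomp Require Import all_boot all_order all_algebra all_fingroup zify.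
From mathcomp Require Import reals.
Import Order.TTheory GRing.Theory Num.Theory.
Set Implicit Arguments. Unset Strict Implicit.

(* Let f be nondecreasing and invariant under u |-> k u with k <> 1, and let
   a >= 2 be the representative of k.  The units u with f u = f 1 form an
   initial segment of [1,q]_Z that is stable under y |-> a y mod q.  If this
   segment stayed below q/2, then as long as a y < q the next unit after y is
   at most a y, hence in the segment, and so is a times it: the segment would
   be unbounded.  Hence f takes the value f 1 somewhere in the upper half.
   Applied to u |-> - f (- u), the same argument shows that f takes the value
   f (-1) somewhere in the lower half, so min f = max f. *)

Section MulClosedDownClosed.
Variables (p q a : nat) (P : nat -> Prop).
Hypotheses (p_gt2 : 2 < p) (a_gt1 : 1 < a) (a_lt_q : a < q) (P1 : P 1).
Hypothesis P_mul : forall y, P y -> P (a * y %% q).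
Hypothesis P_down : forall y z, P y -> 0 < z -> z <= y -> ~~ (p %| z) -> P z.
Hypothesis P_small : forall y, P y -> 2 * y < q.

Let good y := [/\ 0 < y, a * y < q & P (a * y)].

Lemma good_next y : good y -> exists2 z, good z & y < z.
Proof.
move=> [y_gt0 ay_lt_q Pay]; have ay_small := P_small Pay.
have good_of z : y < z <= y.*2 -> ~~ (p %| z) -> good z.
  move=> /andP[yz zy] pNz; have az_lt_q : a * z < q by nia.
  have Pz : P z by apply: (P_down Pay) => //; nia.
  by split=> //; [lia | have := P_mul Pz; rewrite modn_small].
have [p_y1 | pN_y1] := boolP (p %| y.+1); last by exists y.+1 => //; apply: good_of => //; lia.
have y_ge2 : 2 <= y by have := dvdn_leq (ltn0Sn _) p_y1; lia.
have pN_y2 : ~~ (p %| y.+2).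
  by rewrite -addn1 (dvdn_addr _ p_y1) dvdn1; lia.
by exists y.+2 => //; apply: good_of => //; lia.
Qed.

Lemma good_unbounded n : exists2 y, good y & n <= y.
Proof.
elim: n => [|n [y good_y n_y]].
  by exists 1 => //; split; rewrite ?muln1 //; have := P_mul P1; rewrite muln1 modn_small.
by have [z good_z y_z] := good_next good_y; exists z => //; lia.
Qed.

Lemma mul_down_closed_absurd : False.
Proof. by have [y [_ ay_lt_q _] q_y] := good_unbounded q; nia. Qed.

End MulClosedDownClosed.

Section UnitRepresentatives.
Variable q : nat.
Hypothesis q_gt1 : 1 < q.

Lemma unit_rep_lt (u : {unit 'Z_q}) : unit_rep u < q.
Proof. by apply: leq_trans (ltn_ord (val u)) _; rewrite Zp_cast. Qed.

Lemma unit_rep_inj : injective (@unit_rep q).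
Proof. by move=> u v uv; apply/val_inj/val_inj. Qed.

Lemma unit_rep_mul (u v : {unit 'Z_q}) :
  unit_rep (u * v)%g = (unit_rep u * unit_rep v) %% q.
Proof. by rewrite /unit_rep /=; congr (_ %% _); exact: Zp_cast. Qed.

Lemma unit_rep1 : unit_rep (1%g : {unit 'Z_q}) = 1.
Proof. by rewrite /unit_rep /= Zp_cast // modn_small. Qed.

Lemma coprime_unit_rep (u : {unit 'Z_q}) : coprime q (unit_rep u).
Proof. by rewrite -unitZpE // /unit_rep natr_Zp; exact: valP u. Qed.

Lemma unit_rep_gt0 (u : {unit 'Z_q}) : 0 < unit_rep u.
Proof.
by have := coprime_unit_rep u; case: (unit_rep u) => //; rewrite /coprime gcdn0 => /eqP; lia.
Qed.

Lemma unit_repP y : y < q -> coprime q y -> exists u : {unit 'Z_q}, unit_rep u = y.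
Proof.
move=> y_lt_q cop_y; have y_unit : (y%:R : 'Z_q)%R \is a GRing.unit by rewrite unitZpE.
by exists (FinRing.Unit y_unit); rewrite /unit_rep /= val_Zp_nat // modn_small.
Qed.

Lemma unit_rep_mulN1 (m1 u : {unit 'Z_q}) :
  unit_rep m1 = q - 1 -> unit_rep (m1 * u)%g = q - unit_rep u.
Proof.
move=> m1E; rewrite unit_rep_mul m1E.
have := unit_rep_gt0 u; have := unit_rep_lt u; set y := unit_rep u => y_lt_q y_gt0.
rewrite (_ : (q - 1) * y = (y - 1) * q + (q - y)); last by nia.
by rewrite modnMDl modn_small //; lia.
Qed.

Lemma unit_mulC (u v : {unit 'Z_q}) : (u * v = v * u)%g.
Proof. by apply: val_inj; rewrite /= mulrC. Qed.

End UnitRepresentatives.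

Section InvariantMonotone.
Variables (R : realType) (p q : nat) (k : {unit 'Z_q}).
Hypotheses (p_gt2 : 2 < p) (q_gt1 : 1 < q) (k_neq1 : k <> 1%g).
Hypothesis coprime_qE : forall m, coprime q m = ~~ (p %| m).

Definition nondecreasing_units (f : {unit 'Z_q} -> R) :=
  forall u v, unit_rep u <= unit_rep v -> (f u <= f v)%R.

Lemma invariant_reaches_upper_half (f : {unit 'Z_q} -> R) :
  nondecreasing_units f -> (forall u, f (k * u)%g = f u) ->
  exists2 u, q <= 2 * unit_rep u & (f u <= f 1%g)%R.
Proof.
move=> f_mono f_inv.
have [/existsP[u /andP[]] | /existsPn none] :=
  boolP [exists u, (q <= 2 * unit_rep u) && (f u <= f 1%g)%R]; first by exists u.
exfalso; pose P y := exists2 u, unit_rep u = y & (f u <= f 1%g)%R.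
apply: (@mul_down_closed_absurd p q (unit_rep k) P) => //.
- have k_neq1' : unit_rep k != 1 by apply/eqP; rewrite -(unit_rep1 q_gt1) => /unit_rep_inj.
  by have := unit_rep_gt0 q_gt1 k; lia.
- exact: unit_rep_lt.
- by exists 1%g; rewrite ?unit_rep1.
- by move=> _ [u <- fu]; exists (k * u)%g; rewrite ?unit_rep_mul ?f_inv.
- move=> _ z [u <- fu] z_gt0 z_le pNz.
  have [v vE] : exists v : {unit 'Z_q}, unit_rep v = z.
    by apply: unit_repP; rewrite ?coprime_qE //; have := unit_rep_lt q_gt1 u; lia.
  by exists v => //; rewrite -vE in z_le; exact: le_trans (f_mono _ _ z_le) fu.
- by move=> _ [u <- fu]; have := none u; rewrite fu andbT -ltnNge.
Qed.

Lemma invariant_nondecreasing_const (f : {unit 'Z_q} -> R) :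
  nondecreasing_units f -> (forall u, f (k * u)%g = f u) -> forall u, f u = f 1%g.
Proof.
move=> f_mono f_inv.
have [m1 m1E] : exists m1 : {unit 'Z_q}, unit_rep m1 = q - 1.
  by apply: unit_repP => //; [lia | rewrite subn1; exact: coprimenP (ltnW q_gt1)].
have [u0 u0_hi fu0] := invariant_reaches_upper_half f_mono f_inv.
pose g u := (- f (m1 * u)%g)%R.
have [u1 u1_hi gu1] : exists2 u, q <= 2 * unit_rep u & (g u <= g 1%g)%R.
  apply: invariant_reaches_upper_half.
  - move=> u v uv; rewrite /g lerN2; apply: f_mono.
    by rewrite !(unit_rep_mulN1 q_gt1) //; have := unit_rep_lt q_gt1 v; lia.
  - by move=> u; rewrite /g mulgA (unit_mulC m1 k) -mulgA f_inv.
have fm1_le : (f m1 <= f u0)%R.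
  apply: le_trans (_ : f (m1 * u1)%g <= f u0)%R; first by move: gu1; rewrite /g mulg1 lerN2.
  by apply: f_mono; rewrite (unit_rep_mulN1 q_gt1) //; lia.
move=> u; apply/eqP; rewrite eq_le; apply/andP; split.
- apply: le_trans fu0; apply: le_trans fm1_le; apply: f_mono.
  by rewrite m1E; have := unit_rep_lt q_gt1 u; lia.
- by apply: f_mono; rewrite unit_rep1 // unit_rep_gt0.
Qed.

End InvariantMonotone.

Theorem lemma4p2 (R : realType) (p r : nat) (hp : prime p) (hodd : odd p)
    (hr : (1 <= r)%N) (k : {unit 'Z_(p ^ r)}) (f : {unit 'Z_(p ^ r)} -> R)
    (hf : monotonic_units f) :
  (forall u : {unit 'Z_(p ^ r)}, f (k * u)%g = f u) <->
  (k = 1%g \/ forall u v : {unit 'Z_(p ^ r)}, f u = f v).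
Proof.
have p_gt1 := prime_gt1 hp.
have p_gt2 : 2 < p by move: hodd p_gt1; case: (ltngtP p 2) => // ->.
have q_gt1 : 1 < p ^ r by apply: (leq_trans p_gt1); rewrite -{1}(expn1 p) leq_pexp2l // ltnW.
have coprime_qE m : coprime (p ^ r) m = ~~ (p %| m).
  by rewrite coprime_pexpl // prime_coprime.
split; last by case=> [-> u | f_const u]; [rewrite mul1g | exact: f_const].
move=> f_inv; have [-> | k_neq1] := eqVneq k 1%g; [by left | right=> u v].
have const (g : {unit 'Z_(p ^ r)} -> R) := invariant_nondecreasing_const
  p_gt2 q_gt1 (elimN eqP k_neq1) coprime_qE (f := g).
case: hf => [f_mono | f_mono]; first by rewrite (const f f_mono f_inv u) (const f f_mono f_inv v).
have fE w : (- f w = - f 1%g)%R.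
  by apply: (const (fun w => - f w)%R) => [x y /f_mono | x]; rewrite ?lerN2 ?f_inv.
by apply: (@oppr_inj R); rewrite (fE u) (fE v).
Qed.
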